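(* Let $p>3$ be prime, $t\in\{1,3,p,3p\}$, and $1\le r\le 3p-1$ with $\gcd(r,3p)=1$. Then $\mathcal{S}(p,r,t)=p$ if $r\equiv 2\pmod 3$ and $|r|_p$ is odd, and $\mathcal{S}(p,r,t)=0$ otherwise.
   Context: $|r|_m$ is the multiplicative order of $r$ modulo $m$ (with $|r|_1=1$). $S_k(x):=1+x+\cdots+x^{k-1}$, $S_0:=0$. For $m\ge1$ with $\gcd(r,m)=1$, $\kappa(m,r,t):=\dfrac{m|r|_m}{\gcd(m,\,tS_{|r|_m}(r))}$. For $d\in\{1,3,p,3p\}$, $\Lambda(d,r,t):=\{\ell>0:\ \ell \text{ divides } \frac{|r|_{3p}}{\gcd(\kappa(d,r,t),|r|_{3p})}\text{ and }\gcd(r^{\ell\kappa(d,r,t)}-1,3p)=d\}$, and $\mathcal{S}(d,r,t):=\sum_{\ell\in\Lambda(d,r,t)} d\,\phi\!\left(\frac{|r|_{3p}}{\ell\gcd(\kappa(d,r,t),|r|_{3p})}\right)$, with $\phi$ Euler's function. *)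

From mathcomp Require Import all_boot.
Set Implicit Arguments. Unset Strict Implicit. Unset Printing Implicit Defensive.

(* |r|_m : multiplicative order of r modulo m, i.e. the least k > 0 with
   r^k = 1 (mod m).  For m = 1 this gives 1 (r^1 = 1 mod 1).  The search
   range k <= m suffices when gcd(r,m) = 1 (the only case used). *)
Definition mord (m r : nat) : nat :=
  (find (fun k => r ^ k.+1 == 1 %[mod m]) (iota 0 m)).+1.

Definition Ssum (k x : nat) : nat := \sum_(i < k) x ^ i.

Definition kappa (m r t : nat) : nat :=
  (m * mord m r) %/ gcdn m (t * Ssum (mord m r) r).

Definition Nbound (p d r t : nat) : nat :=
  mord (3 * p) r %/ gcdn (kappa d r t) (mord (3 * p) r).

Definition inLambda (p d r t l : nat) : bool :=
  [&& 0 < l, l %| Nbound p d r t &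
      gcdn (r ^ (l * kappa d r t) - 1) (3 * p) == d].

(* S(d,r,t) = sum_{l in Lambda(d,r,t)} d * phi(|r|_{3p} / (l gcd(kappa,|r|_{3p}))).
   Lambda is contained in {1,...,N}, so we sum over l < N+1. *)
Definition Ssum_Lambda (p d r t : nat) : nat :=
  \sum_(l < (Nbound p d r t).+1 | inLambda p d r t l)
     d * totient (mord (3 * p) r %/ (l * gcdn (kappa d r t) (mord (3 * p) r))).

From mathcomp Require Import all_boot cyclic.
Set Implicit Arguments. Unset Strict Implicit. Unset Printing Implicit Defensive.

(* Write o = |r|_p.  Since kappa(p,r,t) = o e with e a divisor of the odd prime
   p, every r^(l kappa) is 1 mod p, so gcd(r^(l kappa) - 1, 3p) = p exactly when
   r^(l kappa) is not 1 mod 3, i.e. when r = 2 (mod 3) and both l and o are odd.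
   In that case |r|_{3p} = lcm(2, o) = 2o and gcd(kappa, 2o) = o, so
   Lambda(p,r,t) = {1} and the sum is p phi(2) = p; otherwise Lambda(p,r,t) is
   empty. *)

Lemma totient_leq n : totient n <= n.
Proof.
rewrite totient_count_coprime.
apply: (@leq_trans (\sum_(0 <= d < n) 1)); first by apply: leq_sum => d _; apply: leq_b1.
by rewrite sum_nat_const_nat muln1 subn0.
Qed.

Section MultiplicativeOrder.

Variables m r : nat.
Hypotheses (m_gt0 : 0 < m) (co_rm : coprime r m).

Let unit_exp k := r ^ k.+1 == 1 %[mod m].

Lemma has_unit_exp : has unit_exp (iota 0 m).
Proof.
apply/hasP; exists (totient m).-1.
  by rewrite mem_iota add0n prednK ?totient_gt0 ?totient_leq.
by rewrite /unit_exp prednK ?totient_gt0 // Euler_exp_totient.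
Qed.

Lemma mord_leq : mord m r <= m.
Proof. by have := has_unit_exp; rewrite has_find size_iota. Qed.

Lemma expn_mord : r ^ mord m r = 1 %[mod m].
Proof.
apply/eqP; have := nth_find 0 has_unit_exp.
by rewrite nth_iota ?add0n //; apply: mord_leq.
Qed.

Lemma mord_min k : 0 < k < mord m r -> r ^ k != 1 %[mod m].
Proof.
case: k => // k /andP[_ lt_k]; have := before_find 0 lt_k.
rewrite nth_iota ?add0n => [/negbT //|]; exact: leq_trans (ltnW lt_k) mord_leq.
Qed.

Lemma expn_mod_eq1 k : (r ^ k == 1 %[mod m]) = (mord m r %| k).
Proof.
have -> : r ^ k = r ^ (k %% mord m r) %[mod m].
  rewrite {1}(divn_eq k (mord m r)) mulnC expnD expnM -modnMml -modnXm.
  by rewrite expn_mord modnXm exp1n modnMml mul1n.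
rewrite /dvdn; have [->|k_ne0] := eqVneq (k %% mord m r) 0; first by rewrite eqxx.
by apply/negbTE/mord_min; rewrite lt0n k_ne0 ltn_pmod.
Qed.

End MultiplicativeOrder.

Lemma mordM m n r : 0 < m -> 0 < n -> coprime m n -> coprime r (m * n) ->
  mord (m * n) r = lcmn (mord m r) (mord n r).
Proof.
move=> m_gt0 n_gt0 co_mn; rewrite coprimeMr => /andP[co_rm co_rn].
have co_rmn : coprime r (m * n) by rewrite coprimeMr co_rm.
have mn_gt0 : 0 < m * n by rewrite muln_gt0 m_gt0.
have dvd_mordM k : (mord (m * n) r %| k) = (lcmn (mord m r) (mord n r) %| k).
  by rewrite -expn_mod_eq1 // chinese_remainder // !expn_mod_eq1 // dvdn_lcm.
by apply/eqP; rewrite eqn_dvd dvd_mordM dvdnn -dvd_mordM dvdnn.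
Qed.

Lemma mord3 r : r %% 3 = 2 -> mord 3 r = 2.
Proof. by move=> r2; rewrite /mord /= -!(modnXm _ 3 r) r2. Qed.

Lemma expn_mod3_neq1 r k : coprime r 3 ->
  (r ^ k != 1 %[mod 3]) = (r %% 3 == 2) && odd k.
Proof.
move=> co_r3; have : r %% 3 < 3 by rewrite ltn_pmod.
have : r %% 3 != 0 by rewrite -/(3 %| r) -prime_coprime // coprime_sym.
case r3: (r %% 3) => [|[|[|]]] // _ _; first by rewrite -modnXm r3 exp1n.
by rewrite expn_mod_eq1 // mord3 // dvdn2 negbK.
Qed.

Lemma kappaE m r t :
  kappa m r t = mord m r * (m %/ gcdn m (t * Ssum (mord m r) r)).
Proof. by rewrite /kappa muln_divA ?dvdn_gcdl // mulnC. Qed.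

Lemma odd_kappa_cofactor m r t : odd m ->
  exists2 e, odd e & kappa m r t = mord m r * e.
Proof.
move=> odd_m; rewrite kappaE; eexists; last by [].
by move: odd_m; rewrite -{1}(divnK (dvdn_gcdl m (t * Ssum (mord m r) r))) oddM => /andP[].
Qed.

Lemma gcdn_prime_mul_eq q p y : prime q -> prime p -> q != p -> p %| y ->
  (gcdn y (q * p) == p) = ~~ (q %| y).
Proof.
move=> q_pr p_pr q_ne_p p_dvd_y; have [q_dvd_y|q_ndvd_y] := boolP (q %| y).
  apply/negbTE/eqP => gcd_p; have : q %| p by rewrite -gcd_p dvdn_gcd q_dvd_y dvdn_mulr.
  by rewrite dvdn_prime2 // (negbTE q_ne_p).
by rewrite Gauss_gcdr ?(gcdn_idPr p_dvd_y) ?eqxx // coprime_sym prime_coprime.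
Qed.

Section PrimeComponent.

Variables p r t : nat.
Hypotheses (p_pr : prime p) (p_gt3 : 3 < p) (co_r3p : coprime r (3 * p)).

Let co_r3 : coprime r 3. Proof. by move: co_r3p; rewrite coprimeMr => /andP[]. Qed.
Let co_rp : coprime r p. Proof. by move: co_r3p; rewrite coprimeMr => /andP[]. Qed.
Let ne3p : 3 != p. Proof. by rewrite ltn_eqF. Qed.
Let co_3p : coprime 3 p. Proof. by rewrite prime_coprime // dvdn_prime2. Qed.
Let odd_p : odd p.
Proof. by apply: contraLR p_gt3 => /(prime_oddPn p_pr) ->. Qed.

Lemma inLambda_pE l : inLambda p p r t l =
  [&& 0 < l, l %| Nbound p p r t, r %% 3 == 2, odd l & odd (mord p r)].
Proof.
have [e odd_e def_kappa] := odd_kappa_cofactor r t odd_p.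
have r_gt0 : 0 < r by case: r co_r3 => // /eqP.
rewrite /inLambda; do 2 congr (_ && _).
rewrite def_kappa gcdn_prime_mul_eq // -?eqn_mod_dvd ?expn_gt0 ?r_gt0 //.
  by rewrite expn_mod3_neq1 // !oddM odd_e andbT andbA.
by rewrite expn_mod_eq1 ?prime_gt0 // mulnCA dvdn_mulr.
Qed.

Hypotheses (r3 : r %% 3 = 2) (odd_mord : odd (mord p r)).

Lemma mord_3p : mord (3 * p) r = 2 * mord p r.
Proof.
rewrite mordM ?prime_gt0 // mord3 // /lcmn.
have /eqP-> : coprime 2 (mord p r) by rewrite coprime2n.
by rewrite divn1.
Qed.

Lemma gcdn_kappa_mord_3p : gcdn (kappa p r t) (mord (3 * p) r) = mord p r.
Proof.
have [e odd_e ->] := odd_kappa_cofactor r t odd_p.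
have /eqP co_e2 : coprime e 2 by rewrite coprimen2.
by rewrite mord_3p [2 * _]mulnC -muln_gcdr co_e2 muln1.
Qed.

Lemma Nbound_p : Nbound p p r t = 2.
Proof. by rewrite /Nbound gcdn_kappa_mord_3p mord_3p mulnK. Qed.

End PrimeComponent.

Theorem lemma5p7 (p t r : nat) :
  prime p -> 3 < p ->
  t \in [:: 1; 3; p; 3 * p] ->
  1 <= r <= 3 * p - 1 -> coprime r (3 * p) ->
  Ssum_Lambda p p r t =
    (if (r %% 3 == 2) && odd (mord p r) then p else 0).
Proof.
(* Neither the value of t nor the upper bound on r plays any role. *)
move=> p_pr p_gt3 _ _ co_r3p; rewrite /Ssum_Lambda.
case: ifP => [/andP[/eqP r3 odd_mord] | not_pcomp].
  rewrite Nbound_p // big_mkcond !big_ord_recl big_ord0 !inLambda_pE //.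
  rewrite Nbound_p // r3 odd_mord /=.
  by rewrite gcdn_kappa_mord_3p // mord_3p // /= mul1n mulnK // totient_prime // muln1 !addn0.
rewrite big1 // => l; rewrite inLambda_pE // => /and5P[_ _ r3 _ odd_mord].
by rewrite r3 odd_mord in not_pcomp.
Qed.
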